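(* Let $K\ge 1$ be an integer, let $\lambda_1,\dots,\lambda_K>0$, $\Psi>0$ and $r_{min}\ge 0$ be real numbers. For $\rho=(\rho_1,\dots,\rho_K)\in[0,\infty)^K$ and $i\in\{1,\dots,K\}$ define the (relaxed) unicast rate $$r_i^U(\rho)=\log_2\!\left(1+\frac{\rho_i\lambda_i}{\sum_{j=1}^{i-1}\rho_j\lambda_i+\Psi}\right).$$ Define $\rho_{1,min},\dots,\rho_{K,min}$ recursively as the numbers for which user $i$ achieves exactly rate $r_{min}$ when user $j$ is allocated $\rho_{j,min}$ for all $j$, i.e. $$r_{min}=\log_2\!\left(1+\frac{\rho_{i,min}\lambda_i}{\sum_{j=1}^{i-1}\rho_{j,min}\lambda_i+\Psi}\right),\quad\text{equivalently}\quad \rho_{i,min}=(2^{r_{min}}-1)\Big(\sum_{j=1}^{i-1}\rho_{j,min}+\Psi/\lambda_i\Big),$$ and let $\rho_{sum}^{min}=\sum_{i=1}^K\rho_{i,min}$. Then $$\rho_{sum}^{min}=(2^{r_{min}}-1)\,\Psi\sum_{i=0}^{K-1}\frac{2^{i r_{min}}}{\lambda_{K-i}}.$$ Moreover, let $\triangle\rho_1,\dots,\triangle\rho_K\ge 0$, set $\rho_i=\rho_{i,min}+\triangle\rho_i$ for each $i$, and let $\triangle r_i^U=r_i^U(\rho)-r_{min}$. Define $$\rho_i^e=\Big(\triangle\rho_i-(2^{r_{min}}-1)\sum_{j=1}^{i-1}\triangle\rho_j\Big)2^{(K-i)r_{min}},\qquad n_i^e=\Big(\Psi/\lambda_i+\sum_{j=1}^{i}\rho_{j,min}\Big)2^{(K-i)r_{min}}.$$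 Then $\sum_{i=1}^K r_i^U(\rho)=Kr_{min}+\sum_{i=1}^K\triangle r_i^U$ and, for every $i\in\{1,\dots,K\}$, $$\triangle r_i^U=\log_2\!\left(1+\frac{\rho_i^e}{n_i^e+\sum_{j=1}^{i-1}\rho_j^e}\right).$$
   Context: This arises in a NOMA downlink with $K$ users decoded by successive interference cancellation: $\rho_i$ is the transmit SNR allocated to user $i$'s unicast signal, $\lambda_i$ is user $i$'s estimated channel gain, and $\Psi>0$ is a constant effective noise term (in the paper $\Psi=\rho b+a$ with $a=1/(1-\phi^2)$, $b=\phi^2\Omega_\epsilon/(1-\phi^2)$). $\rho_{i,min}$ is the minimum SNR giving user $i$ rate $r_{min}$ and $\triangle\rho_i$ is the excess SNR allocated to user $i$. Empty sums are zero. *)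

From mathcomp Require Import all_boot all_order all_algebra.
From mathcomp Require Import all_classical all_reals all_analysis.
Set Implicit Arguments. Unset Strict Implicit. Unset Printing Implicit Defensive.
Import Order.TTheory GRing.Theory Num.Theory.
Local Open Scope ring_scope.

Definition log2 {R : realType} (x : R) : R := ln x / ln 2.

(* relaxed unicast rate of user i (users indexed 1..K, sequences nat -> R) *)
Definition rU {R : realType} (lam : nat -> R) (Psi : R) (rho : nat -> R) (i : nat) : R :=
  log2 (1 + rho i * lam i / (\sum_(1 <= j < i) rho j * lam i + Psi)).

Definition rho_e {R : realType} (K : nat) (rmin : R) (drho : nat -> R) (i : nat) : R :=
  (drho i - (2 `^ rmin - 1) * \sum_(1 <= j < i) drho j) * 2 `^ ((K - i)%:R * rmin).

Definition n_e {R : realType} (K : nat) (rmin : R) (lam : nat -> R) (Psi : R)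
  (rhomin : nat -> R) (i : nat) : R :=
  (Psi / lam i + \sum_(1 <= j < i.+1) rhomin j) * 2 `^ ((K - i)%:R * rmin).

From mathcomp Require Import all_boot all_order all_algebra.
From mathcomp Require Import all_classical all_reals all_analysis.
From mathcomp Require Import ring lra.
Import Order.TTheory GRing.Theory Num.Theory.
Local Open Scope ring_scope.

(* Write a = 2^rmin, q_i = Psi/lambda_i, and S_n, D_n for the partial sums of the
   rho_{j,min} and of the excess powers.  The defining equation of rho_{i,min} says
   S_i + q_i = a (S_{i-1} + q_i), i.e. S_i = a S_{i-1} + (a - 1) q_i; unrolling this
   affine recurrence gives the closed form of rho_sum^min = S_K.  The rate of user i
   is log2 of (S_i + D_i + q_i) / (S_{i-1} + D_{i-1} + q_i); dividing by a, which
   subtracts rmin, leaves (a (S_{i-1} + q_i) + D_i) / (a (S_{i-1} + D_{i-1} + q_i)).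
   The partial sums of the effective powers rho^e telescope to a^(K-n) D_n, and with
   this the effective SNR expression reduces to the same ratio. *)

Lemma powR_natM (R : realType) (x r : R) (n : nat) :
  0 <= x -> x `^ (n%:R * r) = (x `^ r) ^+ n.
Proof. by move=> x_ge0; rewrite mulrC powRrM powR_mulrn // powR_ge0. Qed.

Lemma log2_powR2M (R : realType) (r y : R) :
  0 < y -> log2 (2 `^ r * y) = r + log2 y.
Proof.
move=> y_gt0; have ln2_gt0 : 0 < ln (2 : R) by apply: ln_gt0; lra.
rewrite /log2 lnM ?posrE ?powR_gt0 // ln_powR mulrDl mulfK //.
by rewrite gt_eqF.
Qed.

Lemma affine_recE (R : comNzRingType) (a : R) (c S : nat -> R) (N : nat) :
  S 0%N = 0 ->
  (forall n, (n < N)%N -> S n.+1 = a * S n + c n.+1) ->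
  forall n, (n <= N)%N -> S n = \sum_(0 <= i < n) a ^+ i * c (n - i)%N.
Proof.
move=> S0 S_rec; elim=> [|n IHn] n_lt; first by rewrite S0 big_geq.
rewrite S_rec // (IHn (ltnW n_lt)) big_nat_recl // expr0 mul1r subn0 addrC mulr_sumr.
by congr (_ + _); apply: eq_bigr => i _; rewrite subSS exprS mulrA.
Qed.

Lemma sum_effective_powers (R : comNzRingType) (a : R) (d : nat -> R) (K n : nat) :
  (n <= K)%N ->
  \sum_(1 <= j < n.+1) (d j - (a - 1) * \sum_(1 <= k < j) d k) * a ^+ (K - j)
    = a ^+ (K - n) * \sum_(1 <= j < n.+1) d j.
Proof.
elim: n => [|n IHn] n_lt; first by rewrite !big_geq // mulr0.
rewrite big_nat_recr //= (IHn (ltnW n_lt)) [in RHS]big_nat_recr //=.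
by rewrite -(subnSK n_lt) exprS; ring.
Qed.

Section MinimumPowerAllocation.

Variables (R : realType) (K : nat) (lam : nat -> R) (Psi rmin : R).
Variables (rhomin drho : nat -> R).
Hypothesis lam_gt0 : forall i, (1 <= i <= K)%N -> 0 < lam i.
Hypothesis Psi_gt0 : 0 < Psi.
Hypothesis rmin_ge0 : 0 <= rmin.
Hypothesis rhominE : forall i, (1 <= i <= K)%N ->
  rhomin i = (2 `^ rmin - 1) * (\sum_(1 <= j < i) rhomin j + Psi / lam i).
Hypothesis drho_ge0 : forall i, (1 <= i <= K)%N -> 0 <= drho i.

Local Notation a := (2 `^ rmin).
Local Notation Smin n := (\sum_(1 <= j < n.+1) rhomin j).
Local Notation Sdrho n := (\sum_(1 <= j < n.+1) drho j).

Lemma powR2_ge1 : 1 <= a.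
Proof. by rewrite -[leLHS](powRr0 2) ler_powR ?ler1n. Qed.

Lemma sum_rhominE n : (n <= K)%N ->
  Smin n = (a - 1) * Psi * \sum_(0 <= i < n) 2 `^ (i%:R * rmin) / lam (n - i)%N.
Proof.
move=> n_le; rewrite mulr_sumr.
rewrite (affine_recE _ a (fun i => (a - 1) * (Psi / lam i)) (fun m => Smin m) K
          _ _ _ n_le).
- by apply: eq_bigr => i _; rewrite powR_natM ?ler0n //; ring.
- by rewrite big_geq.
by move=> m m_lt; rewrite big_nat_recr //= rhominE //; ring.
Qed.

Lemma sum_rhomin_ge0 n : (n <= K)%N -> 0 <= Smin n.
Proof.
move=> n_le; rewrite sum_rhominE // big_nat_cond.
apply: mulr_ge0; first by apply: mulr_ge0; [have := powR2_ge1; lra | exact: ltW].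
apply: sumr_ge0 => i /andP[/andP[_ i_lt] _]; apply: divr_ge0; first exact: powR_ge0.
by apply/ltW/lam_gt0; rewrite subn_gt0 i_lt (leq_trans (leq_subr _ _) n_le).
Qed.

Lemma sum_drho_ge0 n : (n <= K)%N -> 0 <= Sdrho n.
Proof.
move=> n_le; rewrite big_nat_cond; apply: sumr_ge0 => j /andP[/andP[j_ge1 j_lt] _].
by apply: drho_ge0; rewrite j_ge1 (leq_trans _ n_le).
Qed.

Lemma sum_rho_e n : (n <= K)%N ->
  \sum_(1 <= j < n.+1) rho_e K rmin drho j = a ^+ (K - n) * Sdrho n.
Proof.
move=> n_le; rewrite -sum_effective_powers //.
by apply: eq_bigr => j _; rewrite /rho_e powR_natM.
Qed.

Lemma rU_excess k : (k < K)%N ->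
  rU lam Psi (fun i => rhomin i + drho i) k.+1 - rmin
    = log2 ((a * (Smin k + Psi / lam k.+1) + Sdrho k.+1)
            / (a * (Smin k + Sdrho k + Psi / lam k.+1))).
Proof.
move=> k_lt; set q := Psi / lam k.+1.
have lam_pos := lam_gt0 k.+1 k_lt; have q_gt0 : 0 < q by exact: divr_gt0.
have S_ge0 := sum_rhomin_ge0 k (ltnW k_lt); have D_ge0 := sum_drho_ge0 k (ltnW k_lt).
have d_ge0 := drho_ge0 k.+1 k_lt; have a_gt0 : 0 < a by have := powR2_ge1; lra.
have M_gt0 : 0 < Smin k + Sdrho k + q by lra.
rewrite /rU -mulr_suml big_split /= rhominE // -/q [Sdrho k.+1]big_nat_recr //=.
set Y := (X in _ = log2 X).
have Y_gt0 : 0 < Y.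
  have aSq_gt0 : 0 < a * (Smin k + q) by apply: mulr_gt0; lra.
  by apply: divr_gt0; [lra | exact: mulr_gt0].
suff -> : 1 + ((a - 1) * (Smin k + q) + drho k.+1) * lam k.+1
            / ((Smin k + Sdrho k) * lam k.+1 + Psi) = a * Y.
  by rewrite log2_powR2M // addrC addKr.
have den_gt0 : 0 < (Smin k + Sdrho k) * lam k.+1 + Psi.
  exact: ltr_wpDl (mulr_ge0 (addr_ge0 S_ge0 D_ge0) (ltW lam_pos)) Psi_gt0.
by rewrite /Y /q; field; rewrite !gt_eqF.
Qed.

Lemma effective_snrE k : (k < K)%N ->
  1 + rho_e K rmin drho k.+1
      / (n_e K rmin lam Psi rhomin k.+1 + \sum_(1 <= j < k.+1) rho_e K rmin drho j)
    = (a * (Smin k + Psi / lam k.+1) + Sdrho k.+1)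
      / (a * (Smin k + Sdrho k + Psi / lam k.+1)).
Proof.
move=> k_lt; set q := Psi / lam k.+1.
have lam_pos := lam_gt0 k.+1 k_lt; have q_gt0 : 0 < q by exact: divr_gt0.
have S_ge0 := sum_rhomin_ge0 k (ltnW k_lt); have D_ge0 := sum_drho_ge0 k (ltnW k_lt).
have a_gt0 : 0 < a by have := powR2_ge1; lra.
rewrite (sum_rho_e k (ltnW k_lt)) /rho_e /n_e powR_natM ?ler0n //.
rewrite [Smin k.+1]big_nat_recr //= rhominE // -/q [Sdrho k.+1]big_nat_recr //=.
rewrite -(subnSK k_lt) exprS; set b := a ^+ (K - k.+1).
have b_gt0 : 0 < b by exact: exprn_gt0.
have M_gt0 : 0 < Smin k + Sdrho k + q by lra.
have -> : (q + (Smin k + (a - 1) * (Smin k + q))) * b + a * b * Sdrho k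
          = a * b * (Smin k + Sdrho k + q) by ring.
by field; rewrite !gt_eqF.
Qed.

Lemma rU_excess_effective i : (1 <= i <= K)%N ->
  rU lam Psi (fun j => rhomin j + drho j) i - rmin
    = log2 (1 + rho_e K rmin drho i
                / (n_e K rmin lam Psi rhomin i + \sum_(1 <= j < i) rho_e K rmin drho j)).
Proof. by case: i => [//|k] /= k_lt; rewrite rU_excess // effective_snrE. Qed.

End MinimumPowerAllocation.

Theorem proposition1 (R : realType) (K : nat) (lam : nat -> R) (Psi rmin : R)
  (rhomin drho : nat -> R) :
  (1 <= K)%N ->
  (forall i, (1 <= i <= K)%N -> 0 < lam i) ->
  0 < Psi -> 0 <= rmin ->
  (forall i, (1 <= i <= K)%N ->
     rhomin i = (2 `^ rmin - 1) * (\sum_(1 <= j < i) rhomin j + Psi / lam i)) ->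
  (forall i, (1 <= i <= K)%N -> 0 <= drho i) ->
  let rho := fun i => rhomin i + drho i in
  let dr := fun i => rU lam Psi rho i - rmin in
  \sum_(1 <= i < K.+1) rhomin i
    = (2 `^ rmin - 1) * Psi * \sum_(0 <= i < K) 2 `^ (i%:R * rmin) / lam (K - i)%N
  /\ \sum_(1 <= i < K.+1) rU lam Psi rho i = K%:R * rmin + \sum_(1 <= i < K.+1) dr i
  /\ (forall i, (1 <= i <= K)%N ->
        dr i = log2 (1 + rho_e K rmin drho i
                         / (n_e K rmin lam Psi rhomin i + \sum_(1 <= j < i) rho_e K rmin drho j))).
Proof.
move=> _ lam_gt0 Psi_gt0 rmin_ge0 rhominE drho_ge0 rho dr; split; [|split].
- exact: (sum_rhominE _ K).
- rewrite /dr big_split /= sumrN sumr_const_nat subSS subn0 mulr_natl.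
  by rewrite addrCA subrr addr0.
- by move=> i; exact: rU_excess_effective.
Qed.
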